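(* Let $G$ be a finite group, and let $f:G \to \{\pm 1\}$ be a class function (i.e. $f(x^{-1}yx) = f(y)$ for all $x,y \in G$) with $\mathbb{E}_{x \in G} f(x) = 0$. Then \[ \Pr_{x,y}\,[f(x)f(y) = f(xy)] \le \frac{1}{2}\left(1 + \frac{1}{d}\right), \] where $x,y$ are chosen uniformly and independently from $G$, and $d = \min_{\rho \ne 1} d_\rho$ is the minimum dimension of a nontrivial irreducible (complex) representation $\rho$ of $G$.
   Context: $d_\rho$ denotes the dimension of the representation $\rho$; the minimum is over nontrivial irreducible complex representations of $G$. $\mathbb{E}$ denotes the average over the uniform distribution on $G$. *)

From mathcomp Require Import all_boot all_order all_algebra all_fingroup all_solvable all_field all_character.
Set Implicit Arguments. Unset Strict Implicit. Unset Printing Implicit Defensive.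
Import Order.TTheory GRing.Theory Num.Theory.
Local Open Scope ring_scope.

(* Degrees are positive
   naturals; we take the minimum as a natural number via truncn. *)
Definition min_nontriv_irr_deg (gT : finGroupType) (G : {group gT}) : nat :=
  \big[minn/(#|G|.+1)%N]_(i : Iirr G | i != 0) Num.truncn ('chi[G]_i 1%g).

Definition hom_prob (gT : finGroupType) (G : {group gT}) (f : gT -> algC) : algC :=
  (#|[set p : gT * gT | [&& p.1 \in G, p.2 \in G & f p.1 * f p.2 == f (p.1 * p.2)%g]]|)%:R
  / (#|G| ^ 2)%:R.

From mathcomp Require Import all_boot all_order all_algebra all_fingroup all_solvable all_field all_character.
From mathcomp Require Import ring.
Import Order.TTheory GRing.Theory Num.Theory.

Set Implicit Arguments.
Unset Strict Implicit.
Unset Printing Implicit Defensive.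

Local Open Scope ring_scope.

(* Extend f by 0 outside G to a real class function phi with '[phi] = 1 and
   '[phi, 1] = 0, so that phi = \sum_i a_i 'chi_i with \sum_i |a_i|^2 = 1 and
   a_0 = 0.  Counting, Pr[f x f y = f (x y)] = (1 + S / |G|^2) / 2 with
   S = \sum_(x, y) phi x phi y phi (x y).  Schur's lemma gives the
   convolution identity \sum_(x, y) phi x phi y 'chi_i (x y)
   = |G|^2 a_i^2 / 'chi_i 1, hence S = |G|^2 \sum_i a_i^3 / 'chi_i 1, and
   |S| <= |G|^2 \sum_(i != 0) |a_i|^2 / d = |G|^2 / d. *)

Section IrrConvolution.

Variables (gT : finGroupType) (G : {group gT}).

Local Notation N := (#|G|%:R : algC).

Lemma sum_irr_mulJ (i : Iirr G) x y : x \in G -> y \in G ->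
  \sum_(g in G) 'chi_i (x * y ^ g)%g = N * 'chi_i x * 'chi_i y / 'chi_i 1%g.
Proof.
move=> Gx Gy; set rG := 'Chi_i.
have chiE z : z \in G -> 'chi_i z = \tr (rG z).
  by move=> Gz; rewrite -irrRepr cfunE Gz mulr1n.
pose M := \sum_(g in G) rG (y ^ g)%g.
(* M sums rG over the conjugates of y, so it commutes with rG and is
   scalar by Schur's lemma. *)
have cM : centgmx rG M.
  apply/centgmxP => z Gz; rewrite /M mulmx_suml mulmx_sumr.
  rewrite (reindex_inj (mulIg z^-1%g)) /=.
  apply: eq_big => [g | g]; first by rewrite groupMr ?groupV.
  rewrite groupMr ?groupV // => Gg.
  rewrite -!(repr_mxM rG) ?groupJ ?groupM ?groupV //.
  by rewrite conjgM /conjg invgK -!mulgA mulVg mulg1.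
have [c defM] := is_scalar_mxP (mx_abs_irr_cent_scalar (groupC (socle_irr _)) cM).
have trM : \tr M = N * 'chi_i y.
  rewrite /M raddf_sum /= mulr_natl -sumr_const; apply: eq_bigr => g Gg.
  by rewrite -chiE ?groupJ ?cfunJ.
have -> : \sum_(g in G) 'chi_i (x * y ^ g)%g = \tr (rG x *m M).
  rewrite /M mulmx_sumr raddf_sum; apply: eq_bigr => g Gg.
  by rewrite -repr_mxM ?chiE ?groupM ?groupJ ?groupV.
rewrite defM mxtrace_scalar in trM.
rewrite defM mul_mx_scalar mxtraceZ -chiE // irr1_degree.
have n0 : (irr_degree (socle_of_Iirr i))%:R != 0 :> algC.
  by rewrite pnatr_eq0 -lt0n irr_degree_gt0.
by apply: (canRL (mulfK n0)); rewrite mulrAC mulr_natr trM mulrAC.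
Qed.

Lemma sum_cfun_mul_irr (phi : 'CF(G)) i :
  \sum_(x in G) phi x * 'chi_i x = N * '[phi, ('chi_i)^*%CF].
Proof.
rewrite cfdotE mulrA mulfV ?neq0CG // mul1r.
by apply: eq_bigr => x _; rewrite cfunE conjCK.
Qed.

Lemma cfun_irr_convolution (phi : 'CF(G)) i :
  \sum_(x in G) \sum_(y in G) phi x * phi y * 'chi_i (x * y)%g
    = N ^+ 2 * '[phi, ('chi_i)^*%CF] ^+ 2 / 'chi_i 1%g.
Proof.
apply: (mulfI (neq0CG G)).
(* Average over the conjugates y ^ g, which phi does not see. *)
transitivity (\sum_(g in G) \sum_(x in G) \sum_(y in G)
                phi x * phi y * 'chi_i (x * y ^ g)%g).
  rewrite mulr_natl -sumr_const; apply: eq_bigr => g Gg.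
  apply: eq_bigr => x _; rewrite (reindex_inj (conjg_inj g)) /=.
  apply: eq_big => [y | y Gy]; first by rewrite groupJr.
  by rewrite cfunJ.
transitivity (\sum_(x in G) \sum_(y in G)
                (phi x * 'chi_i x) * (phi y * 'chi_i y) * (N / 'chi_i 1%g)).
  rewrite exchange_big; apply: eq_bigr => x Gx.
  rewrite exchange_big; apply: eq_bigr => y Gy.
  rewrite -mulr_sumr sum_irr_mulJ //; ring.
transitivity ((\sum_(x in G) phi x * 'chi_i x) ^+ 2 * (N / 'chi_i 1%g)).
  rewrite expr2 !mulr_suml; apply: eq_bigr => x _.
  by rewrite mulr_sumr mulr_suml; apply: eq_bigr => y _.
rewrite sum_cfun_mul_irr; field; exact: irr1_neq0.
Qed.

Lemma cfun_triple_sum (phi : 'CF(G)) :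
  \sum_(x in G) \sum_(y in G) phi x * phi y * phi (x * y)%g
    = N ^+ 2 * \sum_i '[phi, 'chi_i] * '[phi, ('chi_i)^*%CF] ^+ 2 / 'chi_i 1%g.
Proof.
transitivity (\sum_i \sum_(x in G) \sum_(y in G)
                '[phi, 'chi_i] * (phi x * phi y * 'chi_i (x * y)%g)).
  rewrite [RHS]exchange_big /=; apply: eq_bigr => x _.
  rewrite [RHS]exchange_big /=; apply: eq_bigr => y _.
  rewrite {3}(cfun_sum_cfdot phi) sum_cfunE mulr_sumr.
  by apply: eq_bigr => i _; rewrite cfunE; ring.
rewrite mulr_sumr; apply: eq_bigr => i _.
rewrite -(eq_bigr _ (fun x _ => big_distrr _ _ _)) -big_distrr /=.
by rewrite cfun_irr_convolution; ring.
Qed.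

Lemma cfun_triple_sum_le (phi : 'CF(G)) (d : algC) :
    cfReal phi -> '[phi] = 1 -> '[phi, 1] = 0 ->
    0 < d -> (forall i : Iirr G, i != 0 -> d <= 'chi_i 1%g) ->
  `|\sum_(x in G) \sum_(y in G) phi x * phi y * phi (x * y)%g| <= N ^+ 2 / d.
Proof.
move=> phiR phi_norm1 phi_perp1 d_gt0 d_le.
pose a i := '[phi, 'chi[G]_i].
have a_sum : \sum_i `|a i| ^+ 2 = 1.
  by rewrite -phi_norm1 cfdot_sum_irr; apply: eq_bigr => i _; rewrite normCK.
have a_le1 i : `|a i| <= 1.
  rewrite -(expr_le1 (n := 2)) //.
  by have [] := cfCauchySchwarz phi 'chi_i; rewrite phi_norm1 cfnorm_irr mul1r.
have a0 : a 0 = 0 by rewrite /a irr0 phi_perp1.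
rewrite cfun_triple_sum normrM normrX ger0_norm ?ler0n // ler_pM2l ?exprn_gt0 ?gt0CG //.
have -> : \sum_i '[phi, 'chi_i] * '[phi, ('chi_i)^*%CF] ^+ 2 / 'chi_i 1%g
          = \sum_i a i * (a i)^* ^+ 2 / 'chi_i 1%g.
  by apply: eq_bigr => i _; rewrite cfdot_real_conjC.
clearbody a.
apply: le_trans (ler_norm_sum _ _ _) _.
rewrite -[d^-1]mul1r -a_sum mulr_suml; apply: ler_sum => i _.
rewrite !normrM norm_conjC normfV (ger0_norm (ltW (irr1_gt0 i))) -expr2.
have [-> | i_neq0] := eqVneq i 0; first by rewrite a0 normr0 !mul0r expr0n mul0r.
rewrite -[X in _ <= X * _]mul1r; apply: ler_pM.
- by rewrite mulr_ge0 ?exprn_ge0.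
- by rewrite invr_ge0 ltW ?irr1_gt0.
- by rewrite ler_wpM2r ?exprn_ge0.
- by rewrite lef_pV2 ?posrE ?irr1_gt0 ?d_le.
Qed.

End IrrConvolution.

Lemma min_nontriv_irr_deg_gt0 (gT : finGroupType) (G : {group gT}) :
  (0 < min_nontriv_irr_deg G)%N.
Proof.
apply: (big_ind (fun m => 0 < m)%N) => // [m n|i _].
  by rewrite leq_min => -> ->.
by rewrite irr1_degree natrK irr_degree_gt0.
Qed.

Lemma min_nontriv_irr_deg_le (gT : finGroupType) (G : {group gT}) (i : Iirr G) :
  i != 0 -> (min_nontriv_irr_deg G)%:R <= 'chi_i 1%g.
Proof.
move=> i_neq0; rewrite [X in _ <= X]irr1_degree ler_nat.
rewrite -(natrK (R := algC) (irr_degree _)) -irr1_degree.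
exact: (bigmin_le_cond (T := nat)).
Qed.

Lemma class_fun_extend (gT : finGroupType) (G : {group gT}) (f : gT -> algC) :
    (forall x y, x \in G -> y \in G -> f (y ^ x)%g = f y) ->
  exists phi : 'CF(G), {in G, phi =1 f}.
Proof.
move=> f_class; pose fG x := if x \in G then f x else 0.
have fG_class : is_class_fun <<G>>%g (finfun fG).
  rewrite genGid; apply: intro_class_fun => [x y Gx Gy | x /negbTE nGx].
    by rewrite /fG groupJr // Gx f_class.
  by rewrite /fG nGx.
by exists (Cfun 0 fG_class) => x Gx; rewrite cfunE /fG Gx.
Qed.

Lemma pm1_real (R : numDomainType) (u : R) : u = 1 \/ u = -1 -> u \is Num.real.
Proof. by case=> ->; rewrite ?rpredN rpred1. Qed.

Lemma balanced_sign_cfun (gT : finGroupType) (G : {group gT}) (f : gT -> algC) :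
    (forall x, x \in G -> f x = 1 \/ f x = -1) ->
    (forall x y, x \in G -> y \in G -> f (y ^ x)%g = f y) ->
    \sum_(x in G) f x = 0 ->
  exists2 phi : 'CF(G), {in G, phi =1 f}
    & [/\ cfReal phi, '[phi] = 1 & '[phi, 1] = 0].
Proof.
move=> f_pm1 f_class f_mean0; have [phi phiE] := class_fun_extend f_class.
have fR x : x \in G -> f x \is Num.real by move/f_pm1/pm1_real.
exists phi => //; split.
- apply/eqP/cfunP => x; rewrite cfunE.
  have [Gx | nGx] := boolP (x \in G); last by rewrite (cfun0 phi nGx) rmorph0.
  by rewrite phiE //; apply/CrealP/fR.
- rewrite cfdotE (eq_bigr (fun _ => 1)) => [|x Gx].
    by rewrite sumr_const mulVf ?neq0CG.
  by rewrite phiE // conj_Creal ?fR //; case: (f_pm1 x Gx) => ->; rewrite ?mulrNN mulr1.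
- rewrite cfdotE (eq_bigr f) ?f_mean0 ?mulr0 // => x Gx.
  by rewrite phiE // cfun1E Gx conjC1 mulr1.
Qed.

Lemma eq_pm1E (u v : algC) : (u = 1 \/ u = -1) -> (v = 1 \/ v = -1) ->
  (u == v)%:R = 2^-1 * (1 + u * v).
Proof.
move=> u_pm1 v_pm1; have neq : (-1 == 1 :> algC) = false.
  by apply: lt_eqF; apply: lt_trans (ltrN10 _) ltr01.
have two_neq0 : 2 != 0 :> algC by rewrite pnatr_eq0.
rewrite mulrC; apply: (canRL (mulfK two_neq0)).
by case: u_pm1 => ->; case: v_pm1 => ->;
  rewrite ?eqxx ?(eq_sym 1) ?neq ?mulN1r ?mul1r ?opprK ?subrr ?mul0r.
Qed.

Lemma hom_prob_pm1E (gT : finGroupType) (G : {group gT}) (f : gT -> algC) :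
    (forall x, x \in G -> f x = 1 \/ f x = -1) ->
  hom_prob G f = 2^-1 * (1 +
    (\sum_(x in G) \sum_(y in G) f x * f y * f (x * y)%g) / #|G|%:R ^+ 2).
Proof.
move=> f_pm1; rewrite /hom_prob.
have fM_pm1 x y : x \in G -> y \in G -> f x * f y = 1 \/ f x * f y = -1.
  move=> Gx Gy; case: (f_pm1 x Gx) => ->; case: (f_pm1 y Gy) => ->;
    rewrite ?mulN1r ?mul1r ?opprK; by [left | right].
have -> : #|[set p : gT * gT | [&& p.1 \in G, p.2 \in G
                                  & f p.1 * f p.2 == f (p.1 * p.2)%g]]|
    = (\sum_(x in G) \sum_(y in G) nat_of_bool (f x * f y == f (x * y)%g)%R)%N.
  rewrite -sum1_card pair_big /= big_mkcond [RHS]big_mkcond /=.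
  apply: eq_bigr => -[x y] _; rewrite !inE /=.
  by case: (x \in G); case: (y \in G); case: (_ == _).
have -> : (\sum_(x in G) \sum_(y in G) nat_of_bool (f x * f y == f (x * y)%g)%R)%:R
    = \sum_(x in G) \sum_(y in G) 2^-1 * (1 + f x * f y * f (x * y)%g) :> algC.
  rewrite natr_sum; apply: eq_bigr => x Gx; rewrite natr_sum.
  apply: eq_bigr => y Gy.
  by rewrite eq_pm1E //; [exact: fM_pm1 | exact/f_pm1/groupM].
have -> : \sum_(x in G) \sum_(y in G) 2^-1 * (1 + f x * f y * f (x * y)%g)
    = 2^-1 * (#|G|%:R ^+ 2 + \sum_(x in G) \sum_(y in G) f x * f y * f (x * y)%g).
  have -> : #|G|%:R ^+ 2 = \sum_(x in G) \sum_(y in G) 1 :> algC.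
    by rewrite expr2 !sumr_const mulr_natr.
  rewrite -big_split mulr_sumr; apply: eq_bigr => x _.
  by rewrite -big_split mulr_sumr.
by rewrite natrX; field; rewrite pnatr_eq0 -lt0n cardG_gt0.
Qed.

Theorem theorem2 (gT : finGroupType) (G : {group gT}) (f : gT -> algC)
  (f_pm1 : forall x, x \in G -> f x = 1 \/ f x = -1)
  (f_class : forall x y, x \in G -> y \in G -> f (y ^ x)%g = f y)
  (f_mean0 : \sum_(x in G) f x = 0) :
  hom_prob G f <= 2^-1 * (1 + ((min_nontriv_irr_deg G)%:R)^-1).
Proof.
have [phi phiE [phiR phi_norm1 phi_perp1]] := balanced_sign_cfun f_pm1 f_class f_mean0.
have d_gt0 : 0 < (min_nontriv_irr_deg G)%:R :> algC.
  by rewrite ltr0n min_nontriv_irr_deg_gt0.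
have S_le := cfun_triple_sum_le phiR phi_norm1 phi_perp1 d_gt0
  (@min_nontriv_irr_deg_le _ G).
set S := \sum_(x in G) \sum_(y in G) f x * f y * f (x * y)%g.
have S_phi : S = \sum_(x in G) \sum_(y in G) phi x * phi y * phi (x * y)%g.
  by apply: eq_bigr => x Gx; apply: eq_bigr => y Gy; rewrite !phiE ?groupM.
have fR x : x \in G -> f x \is Num.real by move/f_pm1/pm1_real.
have S_real : S \is Num.real.
  by apply: rpred_sum => x Gx; apply: rpred_sum => y Gy; rewrite !rpredM ?fR ?groupM.
rewrite hom_prob_pm1E // -/S ler_pM2l ?invr_gt0 ?ltr0n // lerD2l.
rewrite ler_pdivrMr ?exprn_gt0 ?gt0CG // mulrC.
by apply: le_trans (real_ler_norm S_real) _; rewrite S_phi.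
Qed.
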